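(* Let $G$ be a simple stochastic game, $A$ a subset of the arcs of $G$, and $\sigma,\sigma'$ two positional MAX strategies. If $\sigma' \succ_{G[A,\sigma]} \sigma$, then $\sigma' >_G \sigma$.
   Context: A simple stochastic game (SSG) $G$ is a finite directed graph whose vertex set is partitioned into MAX vertices, MIN vertices, random vertices and a nonempty set of sinks; every non-sink vertex has at least one outgoing arc, every sink has exactly one outgoing arc, a self-loop; each random vertex $x$ carries a rational probability distribution $p_x$ on its out-neighbourhood, positive on every out-neighbour; each sink $s$ has rational value $\mathrm{Val}(s)\in[0,1]$. The game is not assumed to be stopping. A positional MAX (resp. MIN) strategy assigns to each MAX (resp. MIN) vertex one of its out-neighbours. Under $\sigma,\tau$ from start $x_0$, the random play moves from MAX vertex $x$ to $\sigma(x)$, from MIN vertex $x$ to $\tau(x)$, from random vertex $x$ to an out-neighbour drawn by $p_x$ independently, and stays at a sink once reached; its value is $\mathrm{Val}(s)$ if it reaches sink $s$, else $0$ (in particular if it never reaches a sink), and $v^G_{\sigma,\tau}(x_0)$ is its expectation. $v^G_\sigma:=v^G_{\sigma,\tau}$ for a best response $\tau$, i.e. a MIN strategy with $v_{\sigma,\tau}\le v_{\sigma,\tau'}$ pointwise for all MIN strategies $\tau'$ (a positional one exists). Vectors are compared pointwise: $v\ge v'$ if $v(x)\ge v'(x)$ for all $x$, and $v>v'$ if $v\ge v'$ and $v\ne v'$. We write $\sigma'>_G\sigma$ if $v^G_{\sigma'}>v^G_\sigma$, and $\sigma'\succ_G\sigma$ if $\sigma'>_G\sigma$ and, for every MAX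 vertex $x$ with $v^G_{\sigma'}(x)=v^G_\sigma(x)$, $\sigma'(x)=\sigma(x)$. Transformed game: $G[A,\sigma]$ is obtained from a copy of $G$ by replacing each arc $e=(x,y)\in A$ by an arc $(x,s_e)$ to a new sink $s_e$ of value $v^G_\sigma(y)$ (for random $x$, $p_x(s_e)=p_x(y)$); $y$ is kept. Strategies of $G$ and $G[A,\sigma]$ are identified (a MAX vertex $x$ with $\sigma(x)=y$, $(x,y)\in A$, moves to $s_{(x,y)}$), and value vectors in $G[A,\sigma]$ are compared only on the vertices of $G$. *)

From HB Require Import structures.
From Stdlib Require Import ClassicalEpsilon.
From mathcomp Require Import all_boot all_order all_algebra.
From mathcomp Require Import all_classical all_reals all_analysis.

Set Implicit Arguments.
Unset Strict Implicit.
Unset Printing Implicit Defensive.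

Import Order.TTheory GRing.Theory Num.Theory.
Import numFieldNormedType.Exports.
Local Open Scope ring_scope.

Inductive vkind := VMax | VMin | VRand | VSink.

Record ssg (R : realType) (V : finType) := SSG {
  sg_kind : V -> vkind;
  sg_arc : rel V;
  sg_prob : V -> V -> R;
  sg_val : V -> R }.

Definition is_rat (R : realType) (r : R) := exists q : rat, r = ratr q.

Definition wf_ssg (R : realType) (V : finType) (G : ssg R V) : Prop :=
  [/\ (exists s, sg_kind G s = VSink),
      (forall x, sg_kind G x <> VSink -> exists y, sg_arc G x y),
      (forall x, sg_kind G x = VSink -> forall y, sg_arc G x y = (y == x)),
      (forall x, sg_kind G x = VRand ->
         [/\ forall y, sg_arc G x y -> 0 < sg_prob G x y,
             forall y, ~~ sg_arc G x y -> sg_prob G x y = 0,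
             \sum_y sg_prob G x y = 1 &
             forall y, is_rat (sg_prob G x y)]) &
      (forall x, sg_kind G x = VSink -> 0 <= sg_val G x <= 1 /\ is_rat (sg_val G x))].

(* Positional strategies: functions V -> V, choosing an out-neighbour
   at every MAX (resp. MIN) vertex; other values are irrelevant. *)
Definition max_strat (R : realType) (V : finType) (G : ssg R V) (s : V -> V) :=
  forall x, sg_kind G x = VMax -> sg_arc G x (s x).
Definition min_strat (R : realType) (V : finType) (G : ssg R V) (t : V -> V) :=
  forall x, sg_kind G x = VMin -> sg_arc G x (t x).

Definition trans (R : realType) (V : finType) (G : ssg R V) (s t : V -> V)
  (x y : V) : R :=
  match sg_kind G x with
  | VMax => (s x == y)%:R
  | VMin => (t x == y)%:R
  | VRand => sg_prob G x y
  | VSink => (x == y)%:R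
  end.

(* stepval n x = expected payoff Val(s) if the play from x is at a sink s at
   time n, 0 otherwise.  Since sinks are absorbing, "at sink s at time n"
   iff "reached sink s by time n". *)
Fixpoint stepval (R : realType) (V : finType) (G : ssg R V) (s t : V -> V)
  (n : nat) (x : V) : R :=
  if n is n'.+1 then \sum_y trans G s t x y * stepval G s t n' y
  else (if sg_kind G x is VSink then sg_val G x else 0).

Definition playval (R : realType) (V : finType) (G : ssg R V) (s t : V -> V)
  (x : V) : R := limn (fun n => stepval G s t n x).

Definition best_response (R : realType) (V : finType) (G : ssg R V)
  (s t : V -> V) : Prop :=
  min_strat G t /\
  forall t', min_strat G t' -> forall x, playval G s t x <= playval G s t' x.

Definition vmax (R : realType) (V : finType) (G : ssg R V) (s : V -> V) : V -> R :=
  playval G s (epsilon (inhabits s) (best_response G s)).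

(* s' >_G s, comparing value vectors on vertices of G only (through emb). *)
Definition vgt (R : realType) (V W : finType) (emb : V -> W) (v' v : W -> R) :=
  (forall x, v (emb x) <= v' (emb x)) /\ exists x, v (emb x) != v' (emb x).

Definition better (R : realType) (V : finType) (G : ssg R V) (s' s : V -> V) :=
  vgt id (vmax G s') (vmax G s).

Definition arcsA (V : finType) (A : {set V * V}) := {e : V * V | e \in A}.

Definition tvert (V : finType) (A : {set V * V}) := (V + arcsA A)%type.

Definition tgame (R : realType) (V : finType) (G : ssg R V) (A : {set V * V})
  (s : V -> V) : ssg R (tvert A) :=
  {| sg_kind := fun u => match u with inl x => sg_kind G x | inr _ => VSink end;
     sg_arc := fun u w => match u, w with
       | inl x, inl y => sg_arc G x y && ((x, y) \notin A)
       | inl x, inr e => (val e).1 == x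
       | inr e, inr e' => e == e'
       | inr _, inl _ => false end;
     sg_prob := fun u w => match u, w with
       | inl x, inl y => if (x, y) \in A then 0 else sg_prob G x y
       | inl x, inr e => if (val e).1 == x then sg_prob G x (val e).2 else 0
       | inr _, _ => 0 end;
     sg_val := fun u => match u with
       | inl x => sg_val G x
       | inr e => vmax G s (val e).2 end |}.

Definition tstrat (V : finType) (A : {set V * V}) (s : V -> V) :
    tvert A -> tvert A :=
  fun u => match u with
  | inl x => match insub (x, s x) with
             | Some e => inr e
             | None => inl (s x) end
  | inr e => inr e end.

Arguments tstrat {V} A s.

Definition tsucc (R : realType) (V : finType) (G : ssg R V) (A : {set V * V})
  (s' s : V -> V) :=
  let GA := tgame G A s in
  vgt inl (vmax GA (tstrat A s')) (vmax GA (tstrat A s)) /\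
  forall x, sg_kind G x = VMax ->
    vmax GA (tstrat A s') (inl x) = vmax GA (tstrat A s) (inl x) ->
    s' x = s x.

From Stdlib Require Import ClassicalEpsilon.
From mathcomp Require Import all_boot all_order all_algebra.
From mathcomp Require Import all_classical all_reals all_analysis.

Set Implicit Arguments.
Unset Strict Implicit.
Unset Printing Implicit Defensive.

Import Order.TTheory GRing.Theory Num.Theory.
Import numFieldNormedType.Exports.
Local Open Scope classical_set_scope.
Local Open Scope ring_scope.

(* Write v, v' for the values of s, s' in G and u, u' for their values in
   G[A,s].  Cutting arcs into sinks worth v does not change the value of s, so
   u = v on G, hence v <= u'.  Let t' be a best response to s' in G.  A step of
   the play of s' against t' does not decrease u' in expectation (an arc of A
   now leads to a sink worth v <= u') and preserves v', so if the maximum c of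
   u' - v' were positive, the top set where it is attained would be closed
   under that play and would contain no sink.  If v = c somewhere on the top
   set, then u' = u there, so s' = s there, and the play of s against t' stays
   where v = c and never reaches a sink, forcing v = 0.  Otherwise no step from
   the top set uses an arc of A, so the play of s' against t' in G[A,s] stays
   in the top set, forcing u' = 0.  Hence u' <= v', and v <= u' <= v' with
   v < u' wherever u < u'. *)

Lemma sum_indicator_mul (R : pzSemiRingType) (T : finType) (a : T) (f : T -> R) :
  \sum_y (a == y)%:R * f y = f a.
Proof.
rewrite (bigD1 a) //= eqxx mul1r big1 ?addr0 // => y.
by rewrite eq_sym => /negbTE ->; rewrite mul0r.
Qed.

Lemma avg_eq_bound (R : numDomainType) (T : finType) (p f : T -> R) c :
  (forall w, 0 <= p w) -> \sum_w p w = 1 ->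
  (forall w, p w != 0 -> f w <= c) -> c <= \sum_w p w * f w ->
  forall w, p w != 0 -> f w = c.
Proof.
move=> p_ge0 p_sum1 f_le c_le w pw.
have gap_ge0 w' : 0 <= p w' * (c - f w').
  have [->|pw'] := eqVneq (p w') 0; first by rewrite mul0r.
  by rewrite mulr_ge0 // subr_ge0 f_le.
have gap_sum0 : \sum_w' p w' * (c - f w') = 0.
  apply: le_anti; rewrite sumr_ge0 // andbT.
  under eq_bigr do rewrite mulrBr.
  by rewrite sumrB -big_distrl /= p_sum1 mul1r subr_le0.
have /eqP := psumr_eq0P (fun i _ => gap_ge0 i) gap_sum0 (i := w) isT.
by rewrite mulf_eq0 (negbTE pw) subr_eq0 => /eqP.
Qed.

Section MarkovChain.
Variables (R : realType) (V : finType) (H : ssg R V).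

(* The consequences of [wf_ssg] used below.  Rationality is not among them,
   so [tgame], whose sink values are game values, inherits it. *)
Definition valid_ssg := [/\
  forall x, sg_kind H x = VRand ->
    (forall y, 0 <= sg_prob H x y) /\ \sum_y sg_prob H x y = 1,
  forall x, sg_kind H x = VSink -> 0 <= sg_val H x <= 1 &
  forall x, sg_kind H x = VMin -> exists y, sg_arc H x y].

Lemma sum_transE s t x (f : V -> R) :
  \sum_y trans H s t x y * f y =
  match sg_kind H x with
  | VMax => f (s x) | VMin => f (t x)
  | VRand => \sum_y sg_prob H x y * f y | VSink => f x end.
Proof. by rewrite /trans; case: (sg_kind H x); rewrite ?sum_indicator_mul. Qed.

Lemma trans_neq0 s t x y : trans H s t x y != 0 ->
  match sg_kind H x with
  | VMax => y = s x | VMin => y = t x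
  | VRand => sg_prob H x y != 0 | VSink => y = x end.
Proof.
rewrite /trans; case: (sg_kind H x) => //.
- by case: (s x =P y) => [->|_] //; rewrite eqxx.
- by case: (t x =P y) => [->|_] //; rewrite eqxx.
- by case: (x =P y) => [->|_] //; rewrite eqxx.
Qed.

Lemma trans_eq_max s1 s2 t x y : (sg_kind H x = VMax -> s1 x = s2 x) ->
  trans H s1 t x y = trans H s2 t x y.
Proof. by rewrite /trans; case: (sg_kind H x) => // /(_ erefl) ->. Qed.

Lemma trans_eq_min s t1 t2 x y : (sg_kind H x = VMin -> t1 x = t2 x) ->
  trans H s t1 x y = trans H s t2 x y.
Proof. by rewrite /trans; case: (sg_kind H x) => // /(_ erefl) ->. Qed.

Hypothesis validH : valid_ssg.

Lemma trans_ge0 s t x y : 0 <= trans H s t x y.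
Proof.
case: validH => rand _ _; rewrite /trans.
by case E: (sg_kind H x); rewrite ?ler0n //; apply: (rand x E).1.
Qed.

Lemma sum_trans s t x : \sum_y trans H s t x y = 1.
Proof.
case: validH => rand _ _.
transitivity (\sum_y trans H s t x y * 1); first by apply: eq_bigr => y _; rewrite mulr1.
rewrite sum_transE; case E: (sg_kind H x) => //.
by under eq_bigr do rewrite mulr1; apply: (rand x E).2.
Qed.

Lemma trans_avg_eq_bound s t x (f : V -> R) c :
  (forall y, trans H s t x y != 0 -> f y <= c) ->
  c <= \sum_y trans H s t x y * f y ->
  forall y, trans H s t x y != 0 -> f y = c.
Proof. exact: avg_eq_bound (trans_ge0 s t x) (sum_trans s t x). Qed.

Lemma stepval_ge0 s t n x : 0 <= stepval H s t n x.
Proof.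
case: validH => _ sink _.
elim: n x => [|n IH] x /=.
  by case E: (sg_kind H x) => //; case/andP: (sink x E).
by apply: sumr_ge0 => y _; rewrite mulr_ge0 ?trans_ge0.
Qed.

Lemma stepval_le1 s t n x : stepval H s t n x <= 1.
Proof.
case: validH => _ sink _.
elim: n x => [|n IH] x /=.
  by case E: (sg_kind H x); rewrite ?ler01 //; case/andP: (sink x E).
rewrite -(sum_trans s t x); apply: ler_sum => y _.
by rewrite ler_piMr ?trans_ge0.
Qed.

Lemma stepval_sink s t n x : sg_kind H x = VSink -> stepval H s t n x = sg_val H x.
Proof. by move=> xsink; elim: n => [|n IH] /=; rewrite ?sum_transE xsink. Qed.

Lemma stepval_leS s t n x : stepval H s t n x <= stepval H s t n.+1 x.
Proof.
elim: n x => [|n IH] x; last by apply: ler_sum => y _; rewrite ler_wpM2l ?trans_ge0 ?IH.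
case E: (sg_kind H x); last by rewrite !stepval_sink.
all: by rewrite [X in X <= _]/= E stepval_ge0.
Qed.

Lemma playval_cvg s t x : (fun n => stepval H s t n x) @ \oo --> playval H s t x.
Proof.
have cvg_stepval : cvgn (fun n => stepval H s t n x).
  apply: cvgP; apply: nondecreasing_cvgn.
    by apply/nondecreasing_seqP => n; apply: stepval_leS.
  by exists 1 => _ [n _ <-]; apply: stepval_le1.
exact: cvg_stepval.
Qed.

Lemma playval_le s t x m : (forall n, stepval H s t n x <= m) -> playval H s t x <= m.
Proof. by move=> le_m; apply: cvgr_to_le (@playval_cvg s t x) _; apply: nearW. Qed.

Lemma playval_ge s t x m : (forall n, m <= stepval H s t n x) -> m <= playval H s t x.
Proof. by move=> ge_m; apply: cvgr_to_ge (@playval_cvg s t x) _; apply: nearW. Qed.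

Lemma playval_ge0 s t x : 0 <= playval H s t x.
Proof. by apply: playval_ge => n; apply: stepval_ge0. Qed.

Lemma playval_le1 s t x : playval H s t x <= 1.
Proof. by apply: playval_le => n; apply: stepval_le1. Qed.

Lemma playval_sink s t x : sg_kind H x = VSink -> playval H s t x = sg_val H x.
Proof.
move=> xsink; apply: le_anti.
by rewrite playval_le ?playval_ge // => n; rewrite stepval_sink.
Qed.

Lemma playval_fix s t x :
  playval H s t x = \sum_y trans H s t x y * playval H s t y.
Proof.
have cvgS : (fun n => stepval H s t n.+1 x) @ \oo --> playval H s t x.
  by have := @playval_cvg s t x; rewrite -cvg_shiftS.
have cvg_sum : (fun n => stepval H s t n.+1 x) @ \oo -->
               \sum_y trans H s t x y * playval H s t y.
  apply: (@cvg_big _ _ +%R 0 xpredT add_continuous) => y _.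
  by apply: cvgMl_tmp; apply: playval_cvg.
exact: (cvg_unique _ cvgS cvg_sum).
Qed.

Lemma playval_le_super s t (m : V -> R) :
  (forall x, 0 <= m x) -> (forall x, sg_kind H x = VSink -> sg_val H x <= m x) ->
  (forall x, \sum_y trans H s t x y * m y <= m x) ->
  forall x, playval H s t x <= m x.
Proof.
move=> m_ge0 m_sink m_super.
suff stepval_le n x : stepval H s t n x <= m x by move=> x; apply: playval_le.
elim: n x => [|n IH] x /=; first by case E: (sg_kind H x); rewrite ?m_sink.
apply: le_trans (m_super x).
by apply: ler_sum => y _; rewrite ler_wpM2l ?trans_ge0.
Qed.

Lemma playval_closed_eq0 s t (K : V -> Prop) :
  (forall x, K x -> sg_kind H x <> VSink) ->
  (forall x y, K x -> trans H s t x y != 0 -> K y) ->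
  forall x, K x -> playval H s t x = 0.
Proof.
move=> K_nosink K_closed.
suff stepval0 n x : K x -> stepval H s t n x = 0.
  by move=> x Kx; apply: le_anti; rewrite playval_ge0 playval_le // => n; rewrite stepval0.
elim: n x => [|n IH] x Kx /=.
  by case E: (sg_kind H x) => //; case: (K_nosink x Kx).
apply: big1 => y _; have [->|xy] := eqVneq (trans H s t x y) 0; first by rewrite mul0r.
by rewrite IH ?mulr0 //; exact: K_closed Kx xy.
Qed.

Definition merge_resp s t1 t2 z :=
  if playval H s t2 z < playval H s t1 z then t2 z else t1 z.

Lemma playval_merge_resp s t1 t2 x :
  playval H s (merge_resp s t1 t2) x <= Num.min (playval H s t1 x) (playval H s t2 x).
Proof.
set m := fun z => Num.min (playval H s t1 z) (playval H s t2 z).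
apply: (playval_le_super (m := m)) => {x} [z|z zsink|z]; rewrite /m.
- by rewrite le_min !playval_ge0.
- by rewrite !playval_sink // minxx.
have [zmin|zmin] : sg_kind H z = VMin \/ sg_kind H z <> VMin.
  by case: (sg_kind H z); [right|left|right|right].
  rewrite sum_transE zmin /merge_resp; case: ifP => [lt21|/negbT].
  + rewrite (min_r (ltW lt21)) [X in _ <= X](playval_fix s t2) sum_transE zmin.
    by rewrite ge_min lexx orbT.
  + rewrite -leNgt => le12.
    rewrite (min_l le12) [X in _ <= X](playval_fix s t1) sum_transE zmin.
    by rewrite ge_min lexx.
have same_step t y : trans H s (merge_resp s t1 t2) z y = trans H s t z y.
  by apply: trans_eq_min => /zmin.
rewrite le_min; apply/andP; split; rewrite [X in _ <= X]playval_fix; apply: ler_sum => y _.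
  by rewrite (same_step t1) ler_wpM2l ?trans_ge0 // ge_min lexx.
by rewrite (same_step t2) ler_wpM2l ?trans_ge0 // ge_min lexx orbT.
Qed.

Lemma min_strat_merge_resp s t1 t2 :
  min_strat H t1 -> min_strat H t2 -> min_strat H (merge_resp s t1 t2).
Proof. by move=> t1min t2min z zmin; rewrite /merge_resp; case: ifP => _; auto. Qed.

(* A best response minimises the total value over the finitely many MIN
   strategies; merging it with a better response at some vertex would lower it. *)
Lemma best_response_exists s : exists t, best_response H s t.
Proof.
pose P (f : {ffun V -> V}) := `[< min_strat H f >].
have [f0 Pf0] : exists f0, P f0.
  case: validH => _ _ min_arc.
  exists [ffun x => odflt x [pick y | sg_arc H x y]]; apply/asboolP => x xmin.
  rewrite ffunE; case: pickP => [y //|no_arc].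
  by have [y xy] := min_arc x xmin; rewrite no_arc in xy.
pose F (f : {ffun V -> V}) := \sum_x playval H s f x.
case: (arg_minP F Pf0) => t /asboolP tmin t_best.
exists t; split => // t' t'min x; rewrite leNgt; apply/negP => lt'.
pose g := [ffun z => merge_resp s t t' z].
have gE : (g : V -> V) = merge_resp s t t' by apply/funext => z; rewrite ffunE.
have /t_best : P g by apply/asboolP; rewrite gE; apply: min_strat_merge_resp.
apply/negP; rewrite -ltNge /F gE (bigD1 x) //= [X in _ < X](bigD1 x) //=.
apply: ltr_leD.
  by apply: le_lt_trans (playval_merge_resp s t t' x) _; rewrite gt_min lt' orbT.
apply: ler_sum => z _; apply: le_trans (playval_merge_resp s t t' z) _.
by rewrite ge_min lexx.
Qed.

Definition best_resp s := epsilon (inhabits s) (best_response H s).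

Lemma best_respP s : best_response H s (best_resp s).
Proof. exact: epsilon_spec (best_response_exists s). Qed.

Lemma best_resp_min_strat s : min_strat H (best_resp s).
Proof. exact: (best_respP s).1. Qed.

Lemma vmax_le_playval s t x : min_strat H t -> vmax H s x <= playval H s t x.
Proof. by move=> tmin; apply: (best_respP s).2. Qed.

Lemma vmax_fix s x : vmax H s x = \sum_y trans H s (best_resp s) x y * vmax H s y.
Proof. exact: playval_fix. Qed.

Lemma vmax_max s x : sg_kind H x = VMax -> vmax H s x = vmax H s (s x).
Proof. by move=> xmax; rewrite vmax_fix sum_transE xmax. Qed.

Lemma vmax_min s x : sg_kind H x = VMin -> vmax H s x = vmax H s (best_resp s x).
Proof. by move=> xmin; rewrite vmax_fix sum_transE xmin. Qed.

Lemma vmax_rand s x : sg_kind H x = VRand ->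
  vmax H s x = \sum_y sg_prob H x y * vmax H s y.
Proof. by move=> xrand; rewrite vmax_fix sum_transE xrand. Qed.

Lemma vmax_sink s x : sg_kind H x = VSink -> vmax H s x = sg_val H x.
Proof. exact: playval_sink. Qed.

Lemma vmax_ge0 s x : 0 <= vmax H s x.
Proof. exact: playval_ge0. Qed.

Lemma vmax_le1 s x : vmax H s x <= 1.
Proof. exact: playval_le1. Qed.

Lemma vmax_closed_eq0 s t (K : V -> Prop) : min_strat H t ->
  (forall x, K x -> sg_kind H x <> VSink) ->
  (forall x y, K x -> trans H s t x y != 0 -> K y) ->
  forall x, K x -> vmax H s x = 0.
Proof.
move=> tmin K_nosink K_closed x Kx; apply: le_anti; rewrite vmax_ge0 andbT.
by rewrite -(playval_closed_eq0 K_nosink K_closed Kx) vmax_le_playval.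
Qed.

(* Redirecting MIN at [x] to a successor [y] of smaller value would beat the
   best response. *)
Lemma vmax_min_le s x y : sg_kind H x = VMin -> sg_arc H x y ->
  vmax H s x <= vmax H s y.
Proof.
move=> xmin xy; rewrite leNgt; apply/negP => lt_yx.
pose t z := if z == x then y else best_resp s z.
have tmin : min_strat H t.
  by move=> z zmin; rewrite /t; case: eqP => [->|_] //; apply: best_resp_min_strat.
pose m z := if z == x then vmax H s y else vmax H s z.
have m_le z : m z <= vmax H s z by rewrite /m; case: eqP => [->|_] //; apply: ltW.
have y_neq_x : y != x by apply: contraTneq lt_yx => ->; rewrite ltxx.
have : playval H s t x <= m x.
  apply: playval_le_super => {}z.
  - by rewrite /m; case: ifP; rewrite vmax_ge0.
  - move=> zsink; rewrite /m; case: eqP => [zx|_]; last by rewrite vmax_sink.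
    by rewrite -zx zsink in xmin.
  have [->|z_neq_x] := eqVneq z x.
    by rewrite sum_transE xmin /t /m eqxx (negbTE y_neq_x).
  rewrite /m (negbTE z_neq_x) [X in _ <= X]vmax_fix; apply: ler_sum => w _.
  rewrite (@trans_eq_min _ _ (best_resp s)) ?ler_wpM2l ?trans_ge0 ?m_le //.
  by rewrite /t (negbTE z_neq_x).
rewrite /m eqxx => le_ty.
by move: (le_lt_trans (le_trans (vmax_le_playval s x tmin) le_ty) lt_yx); rewrite ltxx.
Qed.

Lemma vmax_le_step s t x : min_strat H t ->
  vmax H s x <= \sum_y trans H s t x y * vmax H s y.
Proof.
move=> tmin; rewrite sum_transE; case E: (sg_kind H x).
- by rewrite vmax_max.
- by apply: vmax_min_le; last exact: tmin.
- by rewrite vmax_rand.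
- by [].
Qed.

Lemma vmax_le_super s (m : V -> R) :
  (forall x, 0 <= m x) ->
  (forall x, sg_kind H x = VSink -> sg_val H x <= m x) ->
  (forall x, sg_kind H x = VMax -> m (s x) <= m x) ->
  (forall x, sg_kind H x = VRand -> \sum_y sg_prob H x y * m y <= m x) ->
  (forall x, sg_kind H x = VMin -> exists2 y, sg_arc H x y & m y <= m x) ->
  forall x, vmax H s x <= m x.
Proof.
move=> m_ge0 m_sink m_max m_rand m_min.
pose t x := odflt x [pick y | sg_arc H x y && (m y <= m x)].
have t_spec z : sg_kind H z = VMin -> sg_arc H z (t z) && (m (t z) <= m z).
  move=> zmin; rewrite /t; case: pickP => [y //|none].
  by have [y zy le_y] := m_min z zmin; move: (none y); rewrite zy le_y.
have tmin : min_strat H t by move=> z /t_spec /andP[].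
move=> x; apply: le_trans (vmax_le_playval s x tmin) _.
apply: playval_le_super => // z; rewrite sum_transE; case E: (sg_kind H z).
- exact: m_max.
- by case/andP: (t_spec z E).
- exact: m_rand.
- by [].
Qed.

End MarkovChain.

Section TransformedGame.
Variables (R : realType) (V : finType) (G : ssg R V) (A : {set V * V}).

Lemma valid_of_wf : wf_ssg G -> valid_ssg G.
Proof.
case=> _ nonsink_arc _ rand sink; split.
- move=> x xrand; have [p_pos p_off p_sum _] := rand x xrand; split => // y.
  by have [/p_pos/ltW|/p_off->] := boolP (sg_arc G x y).
- by move=> x /sink[].
- by move=> x xmin; apply: nonsink_arc; rewrite xmin.
Qed.

Lemma tstrat_inl (s : V -> V) x :
  (exists2 e : arcsA A, tstrat A s (inl x) = inr e & val e = (x, s x)) \/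
  (tstrat A s (inl x) = inl (s x) /\ (x, s x) \notin A).
Proof. by rewrite /tstrat; case: insubP => [e _ ve|notA]; [left; exists e | right]. Qed.

Lemma min_strat_tstrat s0 t : min_strat G t -> min_strat (tgame G A s0) (tstrat A t).
Proof.
move=> tmin [x xmin|//].
by case: (tstrat_inl t x) => [[e -> ve]|[-> tA]] /=; rewrite ?ve ?eqxx ?tmin ?tA.
Qed.

Lemma sum_arcs (F : V -> R) x :
  \sum_(e : arcsA A) (if (val e).1 == x then F (val e).2 else 0) =
  \sum_y (if (x, y) \in A then F y else 0).
Proof.
rewrite -(big_sub A (fun e => if e.1 == x then F e.2 else 0)) big_mkcond /=.
rewrite (eq_bigr (fun e => (fun a b => if (a, b) \in A then
    (if a == x then F b else 0) else 0) e.1 e.2)); last by case.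
rewrite -(pair_bigA _ (fun a b => if (a, b) \in A then
    (if a == x then F b else 0) else 0)) /= (bigD1 x) //=.
rewrite [X in _ + X]big1 ?addr0; first by apply: eq_bigr => b _; rewrite eqxx.
by move=> a ax; apply: big1 => b _; rewrite (negbTE ax); case: ifP.
Qed.

Lemma tgame_rand s0 (f : tvert A -> R) (g : V -> R) x :
  (forall e, f (inr e) = g (val e).2) ->
  \sum_w sg_prob (tgame G A s0) (inl x) w * f w =
  \sum_y sg_prob G x y * (if (x, y) \in A then g y else f (inl y)).
Proof.
move=> fE; rewrite big_sumType /=.
have -> : \sum_(e : arcsA A)
      (if (val e).1 == x then sg_prob G x (val e).2 else 0) * f (inr e) =
    \sum_(e : arcsA A) (if (val e).1 == x then sg_prob G x (val e).2 * g (val e).2 else 0).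
  by apply: eq_bigr => e _; rewrite fE; case: ifP; rewrite ?mul0r.
rewrite (sum_arcs (fun y => sg_prob G x y * g y)) -big_split /=.
by apply: eq_bigr => y _; case: ifP => _; rewrite ?mul0r ?add0r ?addr0.
Qed.

Hypothesis wfG : wf_ssg G.

Lemma valid_tgame s0 : valid_ssg (tgame G A s0).
Proof.
have [rand sink min_arc] := valid_of_wf wfG.
split.
- case=> [x|e] //= xrand; have [p_ge0 p_sum] := rand x xrand; split.
    by case=> [y|e] /=; case: ifP.
  transitivity (\sum_w sg_prob (tgame G A s0) (inl x) w * 1).
    by apply: eq_bigr => w _; rewrite mulr1.
  rewrite (@tgame_rand s0 _ (fun=> 1)) //.
  by under eq_bigr do rewrite if_same mulr1.
- case=> [x|e] /= xsink; first exact: sink.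
  by rewrite vmax_ge0 ?vmax_le1 //; apply: valid_of_wf.
- case=> [x|e] //= xmin; have [y xy] := min_arc x xmin.
  have [xyA|xyA] := boolP ((x, y) \in A); first by exists (inr (exist _ (x, y) xyA)) => /=.
  by exists (inl y); rewrite /= xy xyA.
Qed.

Lemma vmax_tgame_sink s0 s1 e : vmax (tgame G A s0) s1 (inr e) = vmax G s0 (val e).2.
Proof. exact: vmax_sink (valid_tgame s0) _ _ _. Qed.

Lemma tgame_step_inl s0 s1 t1 y w :
  trans (tgame G A s0) (tstrat A s1) (tstrat A t1) (inl y) w != 0 ->
  exists2 z, trans G s1 t1 y z != 0 & (y, z) \in A \/ w = inl z.
Proof.
move/trans_neq0; rewrite [sg_kind (tgame _ _ _) _]/= /trans.
case: (sg_kind G y) => step.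
- exists (s1 y); first by rewrite eqxx oner_eq0.
  case: (tstrat_inl s1 y) step => [[e -> ve] ->|[-> _] ->]; last by right.
  by left; rewrite -ve (valP e).
- exists (t1 y); first by rewrite eqxx oner_eq0.
  case: (tstrat_inl t1 y) step => [[e -> ve] ->|[-> _] ->]; last by right.
  by left; rewrite -ve (valP e).
- case: w step => [z|e] /=.
    by case: ifP => [_|_ pz]; [rewrite eqxx | exists z; last right].
  case: ifP => [/eqP ey pz|_]; last by rewrite eqxx.
  by exists (val e).2; last (left; rewrite -ey -surjective_pairing; exact: valP).
- by exists y; [rewrite eqxx oner_eq0 | right].
Qed.

End TransformedGame.

Section Improvement.
Variables (R : realType) (V : finType) (G : ssg R V) (A : {set V * V}) (s : V -> V).
Hypothesis wfG : wf_ssg G.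

Local Notation GA := (tgame G A s).
Local Notation v := (vmax G s).

Let validG : valid_ssg G := valid_of_wf wfG.
Let validGA : valid_ssg GA := valid_tgame A wfG s.

Lemma vmax_tgame_le x : vmax GA (tstrat A s) (inl x) <= v x.
Proof.
pose m (w : tvert A) := match w with inl y => v y | inr e => v (val e).2 end.
apply: (@vmax_le_super _ _ _ validGA _ m _ _ _ _ _ (inl x)).
- by case=> *; apply: vmax_ge0.
- by case=> [y /= ysink|e _] //; rewrite vmax_sink.
- case=> [y ymax|//]; rewrite /= in ymax.
  by case: (tstrat_inl A s y) => [[e -> ve]|[-> _]]; rewrite /= ?ve (vmax_max validG s ymax).
- case=> [y /= yrand|//].
  rewrite (tgame_rand _ _ (g := v)) // (vmax_rand validG s yrand) /m.
  by under eq_bigr do rewrite if_same.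
- case=> [y /= ymin|//]; set z := best_resp G s y.
  have yz : sg_arc G y z by apply: best_resp_min_strat.
  have [yzA|yzA] := boolP ((y, z) \in A).
    by exists (inr (exist _ (y, z) yzA)); rewrite /= ?eqxx // (vmax_min _ _ ymin).
  by exists (inl z); rewrite /= ?yz ?yzA // (vmax_min _ _ ymin).
Qed.

Lemma vmax_tgame_step s1 t y : min_strat G t ->
  vmax GA (tstrat A s1) (inl y) <=
  \sum_z trans G s1 t y z * (if (y, z) \in A then v z else vmax GA (tstrat A s1) (inl z)).
Proof.
move=> tmin; set u1 := vmax GA (tstrat A s1); rewrite sum_transE.
case E: (sg_kind G y).
- rewrite /u1 (vmax_max validGA (tstrat A s1) (x := inl y) E).
  case: (tstrat_inl A s1 y) => [[e -> ve]|[-> /negbTE ->]] //.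
  have -> : (y, s1 y) \in A by rewrite -ve; apply: valP.
  by rewrite vmax_tgame_sink // ve.
- have [ytA|ytA] := boolP ((y, t y) \in A).
    pose e : arcsA A := exist _ (y, t y) ytA.
    apply: le_trans (vmax_min_le validGA _ (x := inl y) (y := inr e) E _) _.
      by rewrite /= eqxx.
    by rewrite vmax_tgame_sink.
  by apply: (vmax_min_le validGA _ (x := inl y) (y := inl (t y)) E); rewrite /= (tmin y E) ytA.
- rewrite /u1 (vmax_rand validGA _ (x := inl y) E) (tgame_rand _ _ (g := v)) // => e.
  exact: vmax_tgame_sink.
- case: ifP => _ //.
  by rewrite /u1 (vmax_sink validGA _ (x := inl y) E) (vmax_sink validG _ E).
Qed.

Hypothesis arcA : forall e, e \in A -> sg_arc G e.1 e.2.

Lemma vmax_tgame_ge x : v x <= vmax GA (tstrat A s) (inl x).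
Proof.
set u := vmax GA (tstrat A s).
apply: (@vmax_le_super _ _ _ validG s (fun y => u (inl y))) => {x} y.
- exact: vmax_ge0.
- by move=> ysink; rewrite /u (vmax_sink validGA _ (x := inl y)).
- move=> ymax; rewrite /u [X in _ <= X](vmax_max validGA _ (x := inl y)) //.
  case: (tstrat_inl A s y) => [[e -> ve]|[-> _]] //.
  by rewrite vmax_tgame_sink // ve vmax_tgame_le.
- move=> yrand; rewrite /u [X in _ <= X](vmax_rand validGA _ (x := inl y)) //.
  rewrite (tgame_rand _ _ (g := v)) => [|e]; last exact: vmax_tgame_sink.
  have [rand _ _] := validG.
  apply: ler_sum => z _; rewrite ler_wpM2l ?(rand y yrand).1 //.
  by case: ifP => _; rewrite ?vmax_tgame_le.
- move=> ymin; have := vmax_min validGA (tstrat A s) (x := inl y) ymin.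
  have := best_resp_min_strat validGA (tstrat A s) (x := inl y) ymin.
  case: (best_resp GA (tstrat A s) (inl y)) => [z /andP[yz _] uy|e /eqP ey uy].
    by exists z; rewrite // /u uy.
  exists (val e).2; first by rewrite -ey; apply: arcA (valP e).
  by rewrite /u uy vmax_tgame_sink // vmax_tgame_le.
Qed.

Lemma vmax_tgame_tstrat x : vmax GA (tstrat A s) (inl x) = v x.
Proof. by apply: le_anti; rewrite vmax_tgame_le vmax_tgame_ge. Qed.

Section Switch.
Variable s' : V -> V.
Hypothesis le_uu' :
  forall x, vmax GA (tstrat A s) (inl x) <= vmax GA (tstrat A s') (inl x).
Hypothesis switch : forall x, sg_kind G x = VMax ->
  vmax GA (tstrat A s') (inl x) = vmax GA (tstrat A s) (inl x) -> s' x = s x.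

Local Notation u' x := (vmax GA (tstrat A s') (inl x)).
Local Notation v' := (vmax G s').
Local Notation t' := (best_resp G s').

Lemma vmax_le_vmax_tgame x : v x <= u' x.
Proof. by rewrite -vmax_tgame_tstrat. Qed.

(* [c] is a positive upper bound of [u' - v']; the top set, where
   [u' - v' = c], turns out to be empty. *)
Section TopSet.
Variable c : R.
Hypotheses (c_gt0 : 0 < c) (c_max : forall y, u' y - v' y <= c).

Lemma top_closed y z : u' y - v' y = c -> trans G s' t' y z != 0 -> u' z - v' z = c.
Proof.
move=> top yz; apply: (trans_avg_eq_bound validG (f := fun z => u' z - v' z)) yz.
  by move=> w _; apply: c_max.
rewrite -top; under eq_bigr do rewrite mulrBr.
rewrite sumrB -(vmax_fix validG s' y) lerD2r.
apply: le_trans (vmax_tgame_step s' y (best_resp_min_strat validG s')) _.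
apply: ler_sum => w _; rewrite ler_wpM2l ?(trans_ge0 validG) //.
by case: ifP => _ //; apply: vmax_le_vmax_tgame.
Qed.

Lemma top_nonsink y : u' y - v' y = c -> sg_kind G y <> VSink.
Proof.
move=> top ysink; move: c_gt0; rewrite -top.
by rewrite (vmax_sink validGA _ (x := inl y) ysink) (vmax_sink validG _ ysink) subrr ltxx.
Qed.

Lemma top_u' y : u' y - v' y = c -> u' y = c.
Proof.
move=> top; suff v'0 : v' y = 0 by rewrite -top v'0 subr0.
apply: (vmax_closed_eq0 validG (K := fun w => u' w - v' w = c)
          (best_resp_min_strat validG s')) top => [w|w z]; first exact: top_nonsink.
exact: top_closed.
Qed.

Lemma top_v_lt y : u' y - v' y = c -> v y < c.
Proof.
move=> top; rewrite lt_neqAle -{2}(top_u' top) vmax_le_vmax_tgame andbT.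
apply/eqP => vy.
suff vy0 : v y = 0 by move: c_gt0; rewrite -vy vy0 ltxx.
apply: (vmax_closed_eq0 validG (K := fun w => u' w - v' w = c /\ v w = c)
          (best_resp_min_strat validG s')) (conj top vy) => [w [/top_nonsink //]|].
move=> w z [topw vw].
have same z' : trans G s t' w z' = trans G s' t' w z'.
  apply: trans_eq_max => wmax; symmetry; apply: switch => //.
  by rewrite (top_u' topw) vmax_tgame_tstrat vw.
move=> wz; have wz' : trans G s' t' w z != 0 by rewrite -same.
split; first exact: top_closed wz'.
apply: (trans_avg_eq_bound validG (f := v)) wz => [z' wz0|].
  have /(top_closed topw) topz' : trans G s' t' w z' != 0 by rewrite -same.
  by rewrite -(top_u' topz') vmax_le_vmax_tgame.
by rewrite -vw (vmax_le_step validG s w (best_resp_min_strat validG s')).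
Qed.

Lemma top_no_exit y z : u' y - v' y = c -> trans G s' t' y z != 0 -> (y, z) \notin A.
Proof.
move=> top yz; apply/negP => yzA.
pose f z := if (y, z) \in A then v z else u' z.
have f_le z' : trans G s' t' y z' != 0 -> f z' <= c.
  move=> /(top_closed top) topz'; rewrite /f; case: ifP => _; last by rewrite top_u'.
  exact/ltW/top_v_lt.
have fz : f z = c.
  apply: (trans_avg_eq_bound validG f_le) yz.
  rewrite -(top_u' top).
  exact: (vmax_tgame_step s' y (best_resp_min_strat validG s')).
move: fz; rewrite /f yzA => vz.
by move: (top_v_lt (top_closed top yz)); rewrite vz ltxx.
Qed.

Lemma top_empty y : u' y - v' y = c -> False.
Proof.
move=> top; pose K (w : tvert A) := if w is inl z then u' z - v' z = c else False.
have K_nosink w : K w -> sg_kind GA w <> VSink.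
  by case: w => // z topz; apply: top_nonsink topz.
have K_closed w1 w2 : K w1 -> trans GA (tstrat A s') (tstrat A t') w1 w2 != 0 -> K w2.
  case: w1 => // z topz /tgame_step_inl [z' zz' [zz'A|->]].
    by rewrite (negbTE (top_no_exit topz zz')) in zz'A.
  exact: top_closed topz zz'.
have tA'min := min_strat_tstrat (A := A) (s0 := s) (best_resp_min_strat validG s').
have := vmax_closed_eq0 validGA tA'min K_nosink K_closed (x := inl y) top.
by rewrite (top_u' top) => c0; move: c_gt0; rewrite c0 ltxx.
Qed.

End TopSet.

Lemma vmax_tgame_le_vmax x : u' x <= v' x.
Proof.
rewrite -subr_le0 leNgt; apply/negP => pos.
pose d y := u' y - v' y.
have [xm _ dmax] := arg_maxP d (i0 := x) (P := xpredT) isT.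
exact: (top_empty (lt_le_trans pos (dmax x isT)) (fun y => dmax y isT) (erefl (d xm))).
Qed.

End Switch.

End Improvement.

Theorem proposition18 (R : realType) (V : finType) (G : ssg R V)
  (A : {set V * V}) (s s' : V -> V) :
  wf_ssg G ->
  (forall e, e \in A -> sg_arc G e.1 e.2) ->
  max_strat G s -> max_strat G s' ->
  tsucc G A s' s ->
  better G s' s.
Proof.
(* [s] and [s'] need not be MAX strategies: [trans] follows a strategy at MAX
   vertices whether or not it picks an out-neighbour. *)
move=> wfG arcA _ _ [[le_uu' [x0 ne_uu']] switch].
have uE := vmax_tgame_tstrat s wfG arcA.
have le_u'v' := vmax_tgame_le_vmax wfG arcA le_uu' switch.
split=> [x|] /=; first by rewrite -uE (le_trans (le_uu' x)).
have lt_uu' : vmax (tgame G A s) (tstrat A s) (inl x0) <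
               vmax (tgame G A s) (tstrat A s') (inl x0).
  by rewrite lt_neqAle ne_uu' le_uu'.
by exists x0; rewrite -uE (lt_eqF (lt_le_trans lt_uu' (le_u'v' x0))).
Qed.
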